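(* The class of strongly separable extensions is Morita invariant: if $A/B$ is strongly separable and $A/B$ is Morita equivalent to $A'/B'$, then $A'/B'$ is strongly separable.
   Context: All rings have identity, subrings contain the identity, modules are unital; a ring extension $A/B$ means $B$ is a subring of $A$. Let $V=V_A(B)=\{a\in A\mid ba=ab\ \forall b\in B\}$ and $C=V_A(A)$ the center of $A$. $\mathrm{Hom}^\ell(V_C,A_C)$ denotes right $C$-homomorphisms $V\to A$ (an $A$-$A$-bimodule via $(xfy)(v)=xf(v)y$). $A/B$ is strongly separable if $V$ is finitely generated projective as a $C$-module and the $A$-$A$-homomorphism $A\otimes_BA\to\mathrm{Hom}^\ell(V_C,A_C)$, $x\otimes y\mapsto[v\mapsto xvy]$, splits (as an $A$-$A$-bimodule map). For bimodules ${}_AX_{A'}$, ${}_AY_{A'}$, write $X\mid Y$ if $X$ is isomorphic to a direct summand of a finite direct sum of copies of $Y$, and $X\sim Y$ if $X\mid Y$ and $Y\mid X$. $\mathrm{End}^r({}_AM)$ denotes the ring of left $A$-endomorphisms of $M$ acting on the right. A bimodule ${}_AM_{A'}$ is a Morita module if ${}_AM\sim{}_AA$ and $\mathrm{End}^r({}_AM)=A'$. Ring extensions $A/B$ and $A'/B'$ are Morita equivalent if there exist Morita modules ${}_AM_{A'}$ and ${}_BN_{B'}$ with ${}_AA\otimes_BN_{B'}\cong{}_AM_{B'}$. A class $\mathscr C$ is Morita invariant if whenever $A/B\in\mathscr C$ and $A/B$ is Morita equivalent to $A'/B'$, then $A'/B'\in\mathscr C$. *)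

(* Rings are arbitrary (possibly noncommutative) unital
   rings [pzRingType]; modules/bimodules are given by explicit actions on
   a [zmodType] together with the module axioms (MathComp has no theory of
   bimodules over noncommutative rings, nor of tensor products). *)
From HB Require Import structures.
From mathcomp Require Import all_boot all_algebra.
Set Implicit Arguments.
Unset Strict Implicit.
Unset Printing Implicit Defensive.
Import GRing.Theory.
Local Open Scope ring_scope.

Definition is_lmod (R : pzRingType) (M : zmodType) (la : R -> M -> M) : Prop :=
  [/\ forall r x y, la r (x + y) = la r x + la r y,
      forall r s x, la (r + s) x = la r x + la s x,
      forall r s x, la (r * s) x = la r (la s x)
    & forall x, la 1 x = x].

Definition is_rmod (S : pzRingType) (M : zmodType) (ra : M -> S -> M) : Prop :=
  [/\ forall s x y, ra (x + y) s = ra x s + ra y s,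
      forall s t x, ra x (s + t) = ra x s + ra x t,
      forall s t x, ra x (s * t) = ra (ra x s) t
    & forall x, ra x 1 = x].

Definition is_bimod (R S : pzRingType) (M : zmodType)
    (la : R -> M -> M) (ra : M -> S -> M) : Prop :=
  [/\ is_lmod la, is_rmod ra & forall r s x, la r (ra x s) = ra (la r x) s].

Definition additive_fun (X Y : zmodType) (f : X -> Y) : Prop :=
  forall x y, f (x + y) = f x + f y.

Definition lhom (R : pzRingType) (X Y : zmodType)
    (laX : R -> X -> X) (laY : R -> Y -> Y) (f : X -> Y) : Prop :=
  additive_fun f /\ forall r x, f (laX r x) = laY r (f x).

(* X | Y as left R-modules: X is isomorphic to a direct summand of Y^n,
   i.e. there are R-linear p : X -> Y^n, q : Y^n -> X with q o p = id. *)
Definition ldivides (R : pzRingType) (X Y : zmodType)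
    (laX : R -> X -> X) (laY : R -> Y -> Y) : Prop :=
  exists n : nat, exists (p : 'I_n -> X -> Y) (q : ('I_n -> Y) -> X),
    [/\ forall i, lhom laX laY (p i),
        forall u v, q (fun i => u i + v i) = q u + q v,
        forall r u, q (fun i => laY r (u i)) = laX r (q u)
      & forall x, q (fun i => p i x) = x].

Definition lreg (R : pzRingType) : R -> R -> R := fun r x => r * x.

(* _A M _A' is a Morita module: bimodule, _A M ~ _A A, and the canonical map
   A' -> End^r(_A M), a' |-> (m |-> m a'), is bijective (it is always a ring
   morphism since endomorphisms act on the right). *)
Definition morita_module (A A' : pzRingType) (M : zmodType)
    (laM : A -> M -> M) (raM : M -> A' -> M) : Prop :=
  [/\ is_bimod laM raM,
      ldivides laM (@lreg A),
      ldivides (@lreg A) laM,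
      forall f : M -> M, lhom laM laM f -> exists a' : A', forall m, f m = raM m a'
    & forall a1 a2 : A', (forall m, raM m a1 = raM m a2) -> a1 = a2].

Definition biadditive (X Y Z : zmodType) (phi : X -> Y -> Z) : Prop :=
  (forall x x' y, phi (x + x') y = phi x y + phi x' y) /\
  (forall x y y', phi x (y + y') = phi x y + phi x y').

Definition balanced (R : pzRingType) (X Y Z : zmodType)
    (ra : X -> R -> X) (la : R -> Y -> Y) (phi : X -> Y -> Z) : Prop :=
  forall x r y, phi (ra x r) y = phi x (la r y).

Definition is_tensor (R : pzRingType) (X Y T : zmodType)
    (ra : X -> R -> X) (la : R -> Y -> Y) (phi : X -> Y -> T) : Prop :=
  [/\ biadditive phi, balanced ra la phi &
      forall (Z : zmodType) (psi : X -> Y -> Z),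
        biadditive psi -> balanced ra la psi ->
        (exists g : T -> Z, additive_fun g /\ forall x y, g (phi x y) = psi x y) /\
        (forall g1 g2 : T -> Z,
           additive_fun g1 -> (forall x y, g1 (phi x y) = psi x y) ->
           additive_fun g2 -> (forall x y, g2 (phi x y) = psi x y) ->
           forall t, g1 t = g2 t)].

(* A ring extension A/B is given by a unital ring morphism iota : B -> A,
   assumed injective; B is identified with its image. *)

Section Ext.
Variables (A B : pzRingType) (iota : {rmorphism B -> A}).

Definition inC (a : A) : Prop := forall x : A, x * a = a * x.
Definition inV (a : A) : Prop := forall b : B, iota b * a = a * iota b.

(* V is finitely generated projective as a C-module: a direct summand of C^n. *)
Definition V_fgp : Prop :=
  exists n : nat, exists (p : 'I_n -> A -> A) (q : ('I_n -> A) -> A),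
    [/\ (forall i v, inV v -> inC (p i v)) /\
         (forall i v w, inV v -> inV w -> p i (v + w) = p i v + p i w) /\
         (forall i v c, inV v -> inC c -> p i (v * c) = p i v * c),
        (forall u, (forall i, inC (u i)) -> inV (q u)) /\
         (forall u u', (forall i, inC (u i)) -> (forall i, inC (u' i)) ->
            q (fun i => u i + u' i) = q u + q u') /\
         (forall u c, (forall i, inC (u i)) -> inC c ->
            q (fun i => u i * c) = q u * c)
      & forall v, inV v -> q (fun i => p i v) = v].

(* elements of Hom^l(V_C, A_C), represented by functions A -> A which are
   additive and right C-linear on V and vanish outside V *)
Definition isHomVA (f : A -> A) : Prop :=
  [/\ forall v w, inV v -> inV w -> f (v + w) = f v + f w,
      forall v c, inV v -> inC c -> f (v * c) = f v * c
    & forall a, ~ inV a -> f a = 0].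

(* A/B strongly separable: V f.g. projective over C and the A-A-bimodule map
   mu : A (x)_B A -> Hom^l(V_C, A_C), x (x) y |-> [v |-> x v y], has an
   A-A-bimodule section s. *)
Definition strongly_separable : Prop :=
  V_fgp /\
  exists (T : zmodType) (laT : A -> T -> T) (raT : T -> A -> T) (phi : A -> A -> T),
    [/\ is_bimod laT raT,
        is_tensor (fun x (b : B) => x * iota b) (fun (b : B) y => iota b * y) phi,
        forall x a b, phi (x * a) b = laT x (phi a b),
        forall a b y, phi a (b * y) = raT (phi a b) y &
    exists (mu : T -> A -> A) (s : (A -> A) -> T),
      [/\ forall t t' v, mu (t + t') v = mu t v + mu t' v,
          forall x y v, inV v -> mu (phi x y) v = x * v * y,
          forall f g, isHomVA f -> isHomVA g -> s (fun v => f v + g v) = s f + s g,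
          forall x y f, isHomVA f -> s (fun v => x * f v * y) = laT x (raT (s f) y)
        & forall f, isHomVA f -> forall v, inV v -> mu (s f) v = f v]].

End Ext.

(* Morita equivalence of ring extensions A/B (via iota) and A'/B' (via iota'):
   Morita modules _A M _A', _B N _B' with A (x)_B N ~= M as A-B'-bimodules,
   where M is a right B'-module by restriction along iota'. *)
Definition morita_equiv (A B A' B' : pzRingType)
    (iota : {rmorphism B -> A}) (iota' : {rmorphism B' -> A'}) : Prop :=
  exists (M : zmodType) (laM : A -> M -> M) (raM : M -> A' -> M)
         (N : zmodType) (laN : B -> N -> N) (raN : N -> B' -> N),
    [/\ morita_module laM raM,
        morita_module laN raN &
    exists phi : A -> N -> M,
      [/\ is_tensor (fun x (b : B) => x * iota b) laN phi,
          forall x a n, phi (x * a) n = laM x (phi a n)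
        & forall a n b', phi a (raN n b') = raM (phi a n) (iota' b')]].

(* Write M = A (x)_B N, so that A' = End(_A M) and B' = End(_B N). Since _A M | _A A
   and _B B | _B N, M has a finite dual basis (fM i, eM i), and there are B-linear forms
   nu_l on N and elements g_l with sum_l nu_l(g_l) = 1.
   Right multiplication by v in V_A(B) on the A-factor of M commutes with the left
   A-action, so it is an element v' of A'. The map v |-> v' is a ring isomorphism
   V_A(B) ~= V_A'(B') that matches the centres, so it carries the projectivity of V
   over C to V' over C'.
   For the splitting, identify A' with Hom_A(M, A) (x)_A M through the rank-one maps
   u |-> h(u) m. Then A' (x)_B' A' ~= Hom_A(M, A) (x)_A (A (x)_B A) (x)_A M, and
   likewise for Hom(V', A'), so the section of A/B is transported entry by entry
   with respect to the dual basis. *)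

From HB Require Import structures.
From mathcomp Require Import all_boot all_algebra generic_quotient.
From Stdlib Require Import ClassicalEpsilon FunctionalExtensionality.
Set Implicit Arguments.
Unset Strict Implicit.
Unset Printing Implicit Defensive.
Import GRing.Theory.
Local Open Scope ring_scope.
Local Open Scope quotient_scope.

Definition asbool (P : Prop) : bool :=
  if excluded_middle_informative P then true else false.

Lemma asboolP (P : Prop) : reflect P (asbool P).
Proof. by rewrite /asbool; case: excluded_middle_informative => h; constructor. Qed.

Section AdditiveFun.
Variables (X Y Z : zmodType).

Lemma additive_fun0 (f : X -> Y) : additive_fun f -> f 0 = 0.
Proof. by move=> fD; apply: (addrI (f 0)); rewrite -fD !addr0. Qed.

Lemma additive_fun_sum (f : X -> Y) : additive_fun f ->
  forall (I : Type) (r : seq I) (F : I -> X), f (\sum_(i <- r) F i) = \sum_(i <- r) f (F i).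
Proof. by move=> fD I r F; apply: (big_morph f fD (additive_fun0 fD)). Qed.

Lemma additive_fun_comp (f : Y -> Z) (g : X -> Y) :
  additive_fun f -> additive_fun g -> additive_fun (fun x => f (g x)).
Proof. by move=> fD gD x y; rewrite gD fD. Qed.

Lemma additive_fun_add (f g : X -> Y) :
  additive_fun f -> additive_fun g -> additive_fun (fun x => f x + g x).
Proof. by move=> fD gD x y; rewrite fD gD addrACA. Qed.

Lemma additive_fun_big (I : Type) (r : seq I) (F : I -> X -> Y) :
  (forall i, additive_fun (F i)) -> additive_fun (fun x => \sum_(i <- r) F i x).
Proof. by move=> FD x y; rewrite -big_split; apply: eq_bigr => i _; rewrite FD. Qed.

End AdditiveFun.

Lemma pointwise_sum_in (D : Type) (X Y : zmodType) (P : (D -> X) -> Prop)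
    (q : (D -> X) -> Y) :
  P (fun _ => 0) -> (forall u v, P u -> P v -> P (fun d => u d + v d)) ->
  (forall u v, P u -> P v -> q (fun d => u d + v d) = q u + q v) ->
  forall (I : Type) (r : seq I) (F : I -> D -> X), (forall i, P (F i)) ->
  q (fun d => \sum_(i <- r) F i d) = \sum_(i <- r) q (F i).
Proof.
move=> P0 PD qD I r F PF.
have q0 : q (fun _ => 0) = 0.
  apply: (addrI (q (fun _ => 0))); rewrite -qD // [RHS]addr0.
  by congr q; apply: functional_extensionality => d; rewrite addr0.
suff [] : P (fun d => \sum_(i <- r) F i d) /\
          q (fun d => \sum_(i <- r) F i d) = \sum_(i <- r) q (F i) by [].
elim: r => [|i r [Pr IH]].
  have -> : (fun d => \sum_(i <- [::]) F i d) = (fun _ => 0).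
    by apply: functional_extensionality => d; rewrite big_nil.
  by rewrite big_nil.
have -> : (fun d => \sum_(j <- i :: r) F j d) = (fun d => F i d + \sum_(j <- r) F j d).
  by apply: functional_extensionality => d; rewrite big_cons.
by rewrite big_cons qD // IH; split; first exact: PD.
Qed.

Section BimoduleLaws.
Variables (R S : pzRingType) (X : zmodType) (la : R -> X -> X) (ra : X -> S -> X).
Hypothesis bimX : is_bimod la ra.

Lemma lactD r : additive_fun (la r). Proof. by move=> x y; case: bimX => [[]]. Qed.
Lemma lactDl x : additive_fun (la^~ x). Proof. by move=> r s; case: bimX => [[]]. Qed.
Lemma lactM r s x : la (r * s) x = la r (la s x). Proof. by case: bimX => [[]]. Qed.
Lemma lact1 x : la 1 x = x. Proof. by case: bimX => [[]]. Qed.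
Lemma ractD s : additive_fun (ra^~ s). Proof. by move=> x y; case: bimX => _ []. Qed.
Lemma ractDr x : additive_fun (ra x). Proof. by move=> s t; case: bimX => _ []. Qed.
Lemma ractM s t x : ra x (s * t) = ra (ra x s) t. Proof. by case: bimX => _ []. Qed.
Lemma ract1 x : ra x 1 = x. Proof. by case: bimX => _ []. Qed.
Lemma lractA r s x : la r (ra x s) = ra (la r x) s. Proof. by case: bimX. Qed.

Lemma lact_suml (I : Type) (r0 : seq I) (F : I -> R) x :
  la (\sum_(i <- r0) F i) x = \sum_(i <- r0) la (F i) x.
Proof. exact: (additive_fun_sum (lactDl x)). Qed.
Lemma ract_suml (I : Type) (r0 : seq I) (F : I -> X) s :
  ra (\sum_(i <- r0) F i) s = \sum_(i <- r0) ra (F i) s.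
Proof. exact: (additive_fun_sum (ractD s)). Qed.
Lemma ract_sumr (I : Type) (r0 : seq I) (F : I -> S) x :
  ra x (\sum_(i <- r0) F i) = \sum_(i <- r0) ra x (F i).
Proof. exact: (additive_fun_sum (ractDr x)). Qed.

End BimoduleLaws.

Section TensorProperties.
Variables (R : pzRingType) (X Y T : zmodType) (ra : X -> R -> X) (la : R -> Y -> Y).
Variable phi : X -> Y -> T.
Hypothesis phiT : is_tensor ra la phi.

Lemma tensorDl y : additive_fun (phi^~ y). Proof. by move=> x x'; case: phiT => [[]]. Qed.
Lemma tensorDr x : additive_fun (phi x). Proof. by move=> y y'; case: phiT => [[]]. Qed.
Lemma tensor_bal x r y : phi (ra x r) y = phi x (la r y). Proof. by case: phiT. Qed.

Lemma tensor_suml (I : Type) (s : seq I) (F : I -> X) y :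
  phi (\sum_(i <- s) F i) y = \sum_(i <- s) phi (F i) y.
Proof. exact: (additive_fun_sum (tensorDl y)). Qed.
Lemma tensor_sumr (I : Type) (s : seq I) (F : I -> Y) x :
  phi x (\sum_(i <- s) F i) = \sum_(i <- s) phi x (F i).
Proof. exact: (additive_fun_sum (tensorDr x)). Qed.

Lemma tensor_ext (Z : zmodType) (g1 g2 : T -> Z) :
  additive_fun g1 -> additive_fun g2 -> (forall x y, g1 (phi x y) = g2 (phi x y)) ->
  forall t, g1 t = g2 t.
Proof.
move=> g1D g2D g12; case: phiT => [[phiDl phiDr] phi_bal lift].
have psiD : biadditive (fun x y => g1 (phi x y)) by split=> *; rewrite ?phiDl ?phiDr g1D.
have psi_bal : balanced ra la (fun x y => g1 (phi x y)) by move=> x r y; rewrite phi_bal.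
have [_ uniq] := lift Z _ psiD psi_bal.
by apply: uniq => // x y; rewrite g12.
Qed.

Definition tlift (Z : zmodType) (psi : X -> Y -> Z) : T -> Z :=
  epsilon (inhabits (fun _ => 0))
    (fun g => additive_fun g /\ forall x y, g (phi x y) = psi x y).

Section Lift.
Variables (Z : zmodType) (psi : X -> Y -> Z).
Hypotheses (psiD : biadditive psi) (psi_bal : balanced ra la psi).

Let tlift_spec : additive_fun (tlift psi) /\ forall x y, tlift psi (phi x y) = psi x y.
Proof. by rewrite /tlift; apply epsilon_spec; case: phiT => _ _ /(_ Z psi psiD psi_bal) []. Qed.

Lemma tliftD : additive_fun (tlift psi). Proof. by case: tlift_spec. Qed.
Lemma tliftE x y : tlift psi (phi x y) = psi x y. Proof. by case: tlift_spec. Qed.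

End Lift.
End TensorProperties.

Section TensorConstruction.
Variables (R : pzRingType) (X Y : zmodType) (ra : X -> R -> X) (la : R -> Y -> Y).

Definition tensor_eval (Z : zmodType) (psi : X -> Y -> Z) (s : seq (X * Y)) : Z :=
  \sum_(p <- s) psi p.1 p.2.

(* Formal sums of pure tensors, identified when no balanced biadditive map separates
   them; the universal property then holds by construction. *)
Definition tensor_equiv_prop (s t : seq (X * Y)) : Prop :=
  forall (Z : zmodType) (psi : X -> Y -> Z), biadditive psi -> balanced ra la psi ->
    tensor_eval psi s = tensor_eval psi t.

Definition tensor_equiv : rel (seq (X * Y)) := fun s t => asbool (tensor_equiv_prop s t).

Lemma tensor_equiv_refl : reflexive tensor_equiv.
Proof. by move=> s; apply/asboolP. Qed.
Lemma tensor_equiv_sym : symmetric tensor_equiv.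
Proof. by move=> s t; apply/asboolP/asboolP => st Z psi *; rewrite st. Qed.
Lemma tensor_equiv_trans : transitive tensor_equiv.
Proof. by move=> t s u /asboolP st /asboolP tu; apply/asboolP => Z psi *; rewrite st ?tu. Qed.

Canonical tensor_equiv_equiv :=
  EquivRel tensor_equiv tensor_equiv_refl tensor_equiv_sym tensor_equiv_trans.

Definition tensor := {eq_quot tensor_equiv}.
HB.instance Definition _ := Choice.on tensor.

Lemma tensor_evalD (Z : zmodType) (psi : X -> Y -> Z) s t :
  tensor_eval psi (s ++ t) = tensor_eval psi s + tensor_eval psi t.
Proof. exact: big_cat. Qed.

Lemma tensor_eval_repr (Z : zmodType) (psi : X -> Y -> Z) s :
  biadditive psi -> balanced ra la psi ->
  tensor_eval psi (repr (\pi_tensor s)) = tensor_eval psi s.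
Proof.
have /asboolP : tensor_equiv (repr (\pi_tensor s)) s by apply/eqmodP; rewrite reprK.
exact.
Qed.

Lemma tensor_eqP s t : tensor_equiv_prop s t -> \pi_tensor s = \pi_tensor t.
Proof. by move=> st; apply/eqmodP/asboolP. Qed.

Definition tensor_zero : tensor := \pi_tensor [::].
Definition tensor_add (a b : tensor) : tensor := \pi_tensor (repr a ++ repr b).
Definition tensor_opp (a : tensor) : tensor :=
  \pi_tensor [seq (- p.1, p.2) | p <- repr a].

Lemma tensor_addA : associative tensor_add.
Proof.
move=> a b c; apply: tensor_eqP => Z psi *.
by rewrite !tensor_evalD !tensor_eval_repr // !tensor_evalD addrA.
Qed.
Lemma tensor_addC : commutative tensor_add.
Proof. by move=> a b; apply: tensor_eqP => Z psi *; rewrite !tensor_evalD addrC. Qed.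
Lemma tensor_add0 : left_id tensor_zero tensor_add.
Proof.
move=> a; rewrite -[RHS]reprK; apply: tensor_eqP => Z psi *.
by rewrite tensor_evalD tensor_eval_repr // /tensor_eval big_nil add0r.
Qed.
Lemma tensor_addN : left_inverse tensor_zero tensor_opp tensor_add.
Proof.
move=> a; apply: tensor_eqP => Z psi psiD psi_bal.
rewrite tensor_evalD tensor_eval_repr // /tensor_eval big_map big_nil -big_split big1 //.
move=> [x y] _ /=; rewrite -(proj1 psiD) addNr.
exact: (additive_fun0 (f := psi^~ y) (fun x x' => proj1 psiD x x' y)).
Qed.

HB.instance Definition _ :=
  GRing.isZmodule.Build tensor tensor_addA tensor_addC tensor_add0 tensor_addN.

Definition tensor_pure (x : X) (y : Y) : tensor := \pi_tensor [:: (x, y)].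

Lemma tensor_addE s t : (\pi_tensor s : tensor) + (\pi_tensor t : tensor) = \pi_tensor (s ++ t).
Proof. by apply: tensor_eqP => Z psi *; rewrite !tensor_evalD !tensor_eval_repr. Qed.

Lemma tensor_pure_is_tensor : is_tensor ra la tensor_pure.
Proof.
split.
- by split=> *; rewrite tensor_addE; apply: tensor_eqP => Z psi [psiDl psiDr] _;
    rewrite /tensor_eval /= !big_cons !big_nil !addr0 ?psiDl ?psiDr.
- by move=> x r y; apply: tensor_eqP => Z psi _ psi_bal;
    rewrite /tensor_eval !big_cons !big_nil psi_bal.
move=> Z psi psiD psi_bal.
have evalE g : additive_fun g -> (forall x y, g (tensor_pure x y) = psi x y) ->
    forall t, g t = tensor_eval psi (repr t).
  move=> gD gE t; rewrite -{1}[t]reprK; elim: (repr t) => [|[x y] s IH].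
    by rewrite (additive_fun0 gD) /tensor_eval big_nil.
  by rewrite -cat1s -tensor_addE gD gE IH /tensor_eval big_cons.
split; last by move=> g1 g2 g1D g1E g2D g2E t; rewrite !evalE.
exists (fun t => tensor_eval psi (repr t)); split.
  by move=> a b; rewrite -[a]reprK -[b]reprK tensor_addE !tensor_eval_repr ?tensor_evalD.
by move=> x y; rewrite tensor_eval_repr // /tensor_eval big_cons big_nil addr0.
Qed.

End TensorConstruction.

Section ExtensionTensorBimodule.
Variables (A B : pzRingType) (iota : {rmorphism B -> A}) (T : zmodType).
Variable phi : A -> A -> T.
Hypothesis phiT : is_tensor (fun x (b : B) => x * iota b) (fun (b : B) y => iota b * y) phi.

Let phi_mull_bal x :
  balanced (fun x (b : B) => x * iota b) (fun (b : B) y => iota b * y)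
    (fun a b => phi (x * a) b).
Proof. by move=> a r y /=; rewrite mulrA (tensor_bal phiT). Qed.
Let phi_mulr_bal y :
  balanced (fun x (b : B) => x * iota b) (fun (b : B) y => iota b * y)
    (fun a b => phi a (b * y)).
Proof. by move=> a r z /=; rewrite -mulrA (tensor_bal phiT). Qed.
Let phi_mull_biadd x : biadditive (fun a b => phi (x * a) b).
Proof. by split=> *; rewrite ?mulrDr ?(tensorDl phiT) ?(tensorDr phiT). Qed.
Let phi_mulr_biadd y : biadditive (fun a b => phi a (b * y)).
Proof. by split=> *; rewrite ?mulrDl ?(tensorDl phiT) ?(tensorDr phiT). Qed.

Definition tensor_lact (x : A) : T -> T := tlift phi (fun a b => phi (x * a) b).
Definition tensor_ract (t : T) (y : A) : T := tlift phi (fun a b => phi a (b * y)) t.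

Lemma tensor_lactD x : additive_fun (tensor_lact x).
Proof. exact: (tliftD phiT (phi_mull_biadd x) (phi_mull_bal x)). Qed.
Lemma tensor_lactE x a b : tensor_lact x (phi a b) = phi (x * a) b.
Proof. exact: (tliftE phiT (phi_mull_biadd x) (phi_mull_bal x)). Qed.
Lemma tensor_ractD y : additive_fun (tensor_ract^~ y).
Proof. exact: (tliftD phiT (phi_mulr_biadd y) (phi_mulr_bal y)). Qed.
Lemma tensor_ractE y a b : tensor_ract (phi a b) y = phi a (b * y).
Proof. exact: (tliftE phiT (phi_mulr_biadd y) (phi_mulr_bal y)). Qed.

Lemma tensor_bimod : is_bimod tensor_lact tensor_ract.
Proof.
have lD := tensor_lactD; have rD := tensor_ractD.
have ext := tensor_ext phiT.
split; [split|split|] => [r x y|r s x|r s x|x|s x y|s t x|s t x|x|r s x].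
- exact: lD.
- by move: x; apply: ext => [||a b]; rewrite ?tensor_lactE ?mulrDl ?(tensorDl phiT) //;
    apply: additive_fun_add.
- by move: x; apply: ext => [||a b]; rewrite ?tensor_lactE ?mulrA //; apply: additive_fun_comp.
- by move: x; apply: ext => [||a b]; rewrite ?tensor_lactE ?mul1r.
- exact: rD.
- by move: x; apply: ext => [||a b]; rewrite ?tensor_ractE ?mulrDr ?(tensorDr phiT) //;
    apply: additive_fun_add.
- by move: x; apply: ext => [||a b]; rewrite ?tensor_ractE ?mulrA //;
    apply: (additive_fun_comp (rD _) (rD _)).
- by move: x; apply: ext => [||a b]; rewrite ?tensor_ractE ?mulr1.
move: x; apply: ext => [||a b].
- exact: (additive_fun_comp (lD r) (rD s)).
- exact: (additive_fun_comp (rD s) (lD r)).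
by rewrite tensor_ractE !tensor_lactE tensor_ractE.
Qed.

End ExtensionTensorBimodule.

Lemma sum_if_eq (X : zmodType) n (F : 'I_n -> X) j :
  \sum_i (if i == j then F i else 0) = F j.
Proof. by rewrite -big_mkcond big_pred1_eq. Qed.

Lemma ldivides_dual_basis (R : pzRingType) (M : zmodType) (la : R -> M -> M) :
  ldivides la (@lreg R) ->
  exists n (f : 'I_n -> M -> R) (e : 'I_n -> M),
    (forall i, lhom la (@lreg R) (f i)) /\ forall m, m = \sum_i la (f i m) (e i).
Proof.
case=> n [f [q [f_lhom qD q_lin qf]]].
exists n, f, (fun i => q (fun j => if i == j then 1 else 0)); split=> // m.
rewrite -{1}(qf m).
have -> : (fun j => f j m) = (fun j => \sum_i lreg (f i m) (if i == j then 1 else 0)).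
  apply: functional_extensionality => j.
  transitivity (\sum_i (if i == j then f i m else 0)); first by rewrite sum_if_eq.
  by apply: eq_bigr => i _; rewrite /lreg; case: eqP; rewrite ?mulr1 ?mulr0.
rewrite (@pointwise_sum_in _ _ _ (fun _ => True)) //.
by apply: eq_bigr => i _; rewrite q_lin.
Qed.

Lemma ldivides_reg_trace_one (R : pzRingType) (N : zmodType) (la : R -> N -> N) :
  is_lmod la -> ldivides (@lreg R) la ->
  exists k (nu : 'I_k -> N -> R) (g : 'I_k -> N),
    (forall l, lhom la (@lreg R) (nu l)) /\ \sum_l nu l (g l) = 1.
Proof.
case=> laD _ _ _ [k [p [q [_ qD q_lin qp]]]].
pose nu l n := q (fun j => if l == j then n else 0).
exists k, nu, (fun l => p l 1); split=> [l|].
  split=> [n n'|r n]; rewrite /nu.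
    by rewrite -qD; congr q; apply: functional_extensionality => j; case: eqP; rewrite ?addr0.
  rewrite -q_lin; congr q; apply: functional_extensionality => j.
  by case: eqP => // _; rewrite (additive_fun0 (laD r)).
rewrite -[RHS](qp 1) /nu -(@pointwise_sum_in _ _ _ (fun _ => True)) //.
by congr q; apply: functional_extensionality => j; rewrite sum_if_eq.
Qed.

Definition endo_rep (S : pzRingType) (X : zmodType) (ra : X -> S -> X) (F : X -> X) : S :=
  epsilon (inhabits 0) (fun s => forall x, ra x s = F x).

Lemma endo_repE (S : pzRingType) (X : zmodType) (ra : X -> S -> X) (F : X -> X) :
  (exists s, forall x, F x = ra x s) -> forall x, ra x (endo_rep ra F) = F x.
Proof.
by case=> s Fs; rewrite /endo_rep; apply epsilon_spec; exists s => x; rewrite Fs.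
Qed.

Section LinearForms.
Variables (R S : pzRingType) (X : zmodType) (la : R -> X -> X) (ra : X -> S -> X).

Lemma lhom_ract : is_bimod la ra -> forall s, lhom la la (ra^~ s).
Proof. by move=> bimX s; split=> [|r x]; [exact: (ractD bimX) | rewrite (lractA bimX)]. Qed.

Lemma lhom_comp (F : X -> X) (h : X -> R) :
  lhom la la F -> lhom la (@lreg R) h -> lhom la (@lreg R) (fun x => h (F x)).
Proof. by case=> FD FZ [hD hZ]; split=> [x y|r x]; rewrite ?FD ?hD // FZ hZ. Qed.

Lemma lhom_mulr (h : X -> R) (a : R) :
  lhom la (@lreg R) h -> lhom la (@lreg R) (fun x => h x * a).
Proof. by case=> hD hZ; split=> [x y|r x]; rewrite ?hD ?mulrDl // hZ /lreg mulrA. Qed.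

Lemma lhom_add (h1 h2 : X -> R) :
  lhom la (@lreg R) h1 -> lhom la (@lreg R) h2 ->
  lhom la (@lreg R) (fun x => h1 x + h2 x).
Proof.
case=> h1D h1Z [h2D h2Z]; split; first exact: additive_fun_add.
by move=> r x; rewrite h1Z h2Z /lreg mulrDr.
Qed.

Lemma lhom_sum (I : Type) (r : seq I) (H : I -> X -> R) :
  (forall i, lhom la (@lreg R) (H i)) ->
  lhom la (@lreg R) (fun x => \sum_(i <- r) H i x).
Proof.
move=> HL; split=> [|a x]; first by apply: additive_fun_big => i; case: (HL i).
by rewrite /lreg mulr_sumr; apply: eq_bigr => i _; case: (HL i) => _ ->.
Qed.

End LinearForms.

Section ExtensionCentralizers.
Variables (A B : pzRingType) (iota : {rmorphism B -> A}).

Lemma inC_inV (c : A) : inC c -> inV iota c.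
Proof. by move=> cC b; rewrite cC. Qed.
Lemma inV_add (v w : A) : inV iota v -> inV iota w -> inV iota (v + w).
Proof. by move=> vV wV b; rewrite mulrDr mulrDl vV wV. Qed.
Lemma inV_mul (v w : A) : inV iota v -> inV iota w -> inV iota (v * w).
Proof. by move=> vV wV b; rewrite mulrA vV -mulrA wV mulrA. Qed.

Lemma isHomVA0 : isHomVA iota (fun _ => 0).
Proof. by split=> *; rewrite ?addr0 ?mul0r. Qed.
Lemma isHomVA_add f g :
  isHomVA iota f -> isHomVA iota g -> isHomVA iota (fun v => f v + g v).
Proof.
case=> fD fC f0 [gD gC g0]; split=> [v w vV wV|v c vV cC|a aV].
- by rewrite fD // gD // addrACA.
- by rewrite fC // gC // mulrDl.
- by rewrite f0 // g0 // addr0.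
Qed.
Lemma isHomVA_mul x y f : isHomVA iota f -> isHomVA iota (fun v => x * f v * y).
Proof.
case=> fD fC f0; split=> [v w vV wV|v c vV cC|a aV].
- by rewrite fD // mulrDr mulrDl.
- by rewrite fC // -!mulrA cC.
- by rewrite f0 // mulr0 mul0r.
Qed.

Lemma isHomVA_mull x f : isHomVA iota f -> isHomVA iota (fun v => x * f v).
Proof.
move=> fH; have := isHomVA_mul x 1 fH.
by congr isHomVA; apply: functional_extensionality => v; rewrite mulr1.
Qed.

Lemma isHomVA_mulr y f : isHomVA iota f -> isHomVA iota (fun v => f v * y).
Proof.
move=> fH; have := isHomVA_mul 1 y fH.
by congr isHomVA; apply: functional_extensionality => v; rewrite mul1r.
Qed.

End ExtensionCentralizers.

Section CentralizerTransfer.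
Variables (A B A' B' : pzRingType).
Variables (iota : {rmorphism B -> A}) (iota' : {rmorphism B' -> A'}).
Variables (f : A -> A') (g : A' -> A).
Hypotheses (f_inV : forall v, inV iota v -> inV iota' (f v))
  (g_inV : forall w, inV iota' w -> inV iota (g w))
  (fK : forall v, inV iota v -> g (f v) = v)
  (gK : forall w, inV iota' w -> f (g w) = w)
  (fD : forall v w, inV iota v -> inV iota w -> f (v + w) = f v + f w)
  (fM : forall v w, inV iota v -> inV iota w -> f (v * w) = f v * f w)
  (f_inC : forall c, inC c -> inC (f c))
  (g_inC : forall c, inC c -> inC (g c)).

Let gD v w : inV iota' v -> inV iota' w -> g (v + w) = g v + g w.
Proof.
move=> vV wV; have [gvV gwV] := (g_inV vV, g_inV wV).
by rewrite -{1}(gK vV) -{1}(gK wV) -fD // fK //; apply: inV_add.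
Qed.
Let gM v w : inV iota' v -> inV iota' w -> g (v * w) = g v * g w.
Proof.
move=> vV wV; have [gvV gwV] := (g_inV vV, g_inV wV).
by rewrite -{1}(gK vV) -{1}(gK wV) -fM // fK //; apply: inV_mul.
Qed.

Lemma V_fgp_transfer : V_fgp iota -> V_fgp iota'.
Proof.
case=> n [p [q [[pC [pD pM]] [qV [qD qM]] qp]]].
have pV i v : inV iota' v -> inV iota (p i (g v)) by move=> vV; apply/inC_inV/pC/g_inV.
have gC (u : 'I_n -> A') : (forall i, inC (u i)) -> forall i, inC (g (u i)).
  by move=> uC i; apply: g_inC.
exists n, (fun i v => f (p i (g v))), (fun u => f (q (fun i => g (u i)))); split.
- split=> [i v vV|]; first by apply/f_inC/pC/g_inV.
  split=> [i v w vV wV|i v c vV cC] /=.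
    by rewrite gD // pD ?fD //; first [exact: pV | exact: g_inV].
  have [cV gcC] := (inC_inV iota' cC, g_inC cC).
  rewrite gM // pM; [|exact: g_inV|exact: gcC].
  by rewrite fM ?gK //; exact: pV.
- split=> [u uC|]; first exact/f_inV/qV/gC.
  split=> [u u' uC u'C|u c uC cC] /=.
    have uV i := inC_inV iota' (uC i); have u'V i := inC_inV iota' (u'C i).
    have -> : (fun i => g (u i + u' i)) = (fun i => g (u i) + g (u' i)).
      by apply: functional_extensionality => i; rewrite gD.
    by rewrite qD ?fD //; first [exact: gC | exact: (qV _ (gC _ uC)) | exact: (qV _ (gC _ u'C))].
  have uV i := inC_inV iota' (uC i); have cV := inC_inV iota' cC.
  have gcC := g_inC cC.
  have -> : (fun i => g (u i * c)) = (fun i => g (u i) * g c).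
    by apply: functional_extensionality => i; rewrite gM.
  by rewrite qM ?fM ?gK //; [exact: (qV _ (gC _ uC)) | exact: gC].
move=> v vV /=; have -> : (fun i => g (f (p i (g v)))) = (fun i => p i (g v)).
  by apply: functional_extensionality => i; rewrite fK //; exact: pV.
by rewrite qp ?gK //; exact: g_inV.
Qed.

End CentralizerTransfer.

Section MoritaTransfer.
Variables (A B A' B' : pzRingType).
Variables (iota : {rmorphism B -> A}) (iota' : {rmorphism B' -> A'}).
Variables (M : zmodType) (laM : A -> M -> M) (raM : M -> A' -> M).
Variables (N : zmodType) (laN : B -> N -> N) (raN : N -> B' -> N).
Hypotheses (bimM : is_bimod laM raM) (bimN : is_bimod laN raN).
Hypothesis endM : forall f, lhom laM laM f -> exists a', forall m, f m = raM m a'.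
Hypothesis raM_inj : forall a1 a2 : A', (forall m, raM m a1 = raM m a2) -> a1 = a2.
Hypothesis endN : forall f, lhom laN laN f -> exists b', forall n, f n = raN n b'.
Variables (nM : nat) (fM : 'I_nM -> M -> A) (eM : 'I_nM -> M).
Hypothesis fM_lhom : forall i, lhom laM (@lreg A) (fM i).
Hypothesis M_decomp : forall m, m = \sum_i laM (fM i m) (eM i).
Variables (kN : nat) (nu : 'I_kN -> N -> B) (gN : 'I_kN -> N).
Hypothesis nu_lhom : forall l, lhom laN (@lreg B) (nu l).
Hypothesis sum_nu : \sum_l nu l (gN l) = 1.
Variable phi : A -> N -> M.
Hypothesis phiT : is_tensor (fun x (b : B) => x * iota b) laN phi.
Hypothesis phiL : forall x a n, phi (x * a) n = laM x (phi a n).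
Hypothesis phiR : forall a n b', phi a (raN n b') = raM (phi a n) (iota' b').

Let raM_rep F : lhom laM laM F -> forall m, raM m (endo_rep raM F) = F m.
Proof. by move/endM/endo_repE. Qed.
Let raN_rep F : lhom laN laN F -> forall n, raN n (endo_rep raN F) = F n.
Proof. by move/endN/endo_repE. Qed.

Let fMD i : additive_fun (fM i). Proof. by case: (fM_lhom i). Qed.
Let fMZ i a m : fM i (laM a m) = a * fM i m. Proof. by case: (fM_lhom i) => _ ->. Qed.
Let nuD l : additive_fun (nu l). Proof. by case: (nu_lhom l). Qed.
Let nuZ l b n : nu l (laN b n) = b * nu l n. Proof. by case: (nu_lhom l) => _ ->. Qed.

Lemma phi_lact a n : phi a n = laM a (phi 1 n).
Proof. by rewrite -phiL mulr1. Qed.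

Lemma A'_ext (a1 a2 : A') :
  (forall a n, raM (phi a n) a1 = raM (phi a n) a2) -> a1 = a2.
Proof.
by move=> a12; apply: raM_inj; apply: (tensor_ext phiT) => //; exact: (ractD bimM).
Qed.

Definition dyadN l n : B' := endo_rep raN (fun u => laN (nu l u) n).

Lemma raN_dyadN l n u : raN u (dyadN l n) = laN (nu l u) n.
Proof.
apply: raN_rep; split=> [x y|b x]; first by rewrite nuD (lactDl bimN).
by rewrite nuZ (lactM bimN).
Qed.

Lemma N_decomp n : n = \sum_l raN (gN l) (dyadN l n).
Proof.
under eq_bigr do rewrite raN_dyadN.
by rewrite -(lact_suml bimN) sum_nu (lact1 bimN).
Qed.

Let nuA_biadd l : biadditive (fun a n => a * iota (nu l n)).
Proof. by split=> *; rewrite ?mulrDl ?nuD ?rmorphD ?mulrDr. Qed.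
Let nuA_bal l : balanced (fun x (b : B) => x * iota b) laN (fun a n => a * iota (nu l n)).
Proof. by move=> x r y; rewrite nuZ rmorphM mulrA. Qed.

Definition nuA l : M -> A := tlift phi (fun a n => a * iota (nu l n)).

Lemma nuAD l : additive_fun (nuA l).
Proof. exact: (tliftD phiT (nuA_biadd l) (nuA_bal l)). Qed.
Lemma nuAE l a n : nuA l (phi a n) = a * iota (nu l n).
Proof. exact: (tliftE phiT (nuA_biadd l) (nuA_bal l)). Qed.

Lemma nuA_lhom l : lhom laM (@lreg A) (nuA l).
Proof.
split=> [|x]; first exact: nuAD.
apply: (tensor_ext phiT) => [u v|u v|a n]; first by rewrite (lactD bimM) nuAD.
  by rewrite nuAD /lreg mulrDr.
by rewrite -phiL !nuAE /lreg mulrA.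
Qed.

Lemma sum_nuA_phi a : \sum_l nuA l (phi a (gN l)) = a.
Proof. by under eq_bigr do rewrite nuAE; rewrite -mulr_sumr -rmorph_sum sum_nu rmorph1 mulr1. Qed.

Lemma phi_injl (a1 a2 : A) : (forall n, phi a1 n = phi a2 n) -> a1 = a2.
Proof.
by move=> a12; rewrite -[a1]sum_nuA_phi -[a2]sum_nuA_phi; apply: eq_bigr => l _; rewrite a12.
Qed.

Lemma raM_dyadN l n u : raM u (iota' (dyadN l n)) = phi (nuA l u) n.
Proof.
move: u; apply: (tensor_ext phiT) => [||a k]; first exact: (ractD bimM).
  by move=> u v; rewrite nuAD (tensorDl phiT).
by rewrite -phiR raN_dyadN nuAE -(tensor_bal phiT).
Qed.

Let vact_biadd v : biadditive (fun a n => phi (a * v) n).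
Proof. by split=> *; rewrite ?mulrDl ?(tensorDl phiT) ?(tensorDr phiT). Qed.
Let vact_bal v :
  inV iota v -> balanced (fun x (b : B) => x * iota b) laN (fun a n => phi (a * v) n).
Proof. by move=> vV x r y; rewrite -mulrA vV mulrA (tensor_bal phiT). Qed.

Definition vact v : M -> M := tlift phi (fun a n => phi (a * v) n).
Definition vmorph v : A' := endo_rep raM (vact v).

Section VAction.
Variable v : A.
Hypothesis vV : inV iota v.

Lemma vactD : additive_fun (vact v).
Proof. exact: (tliftD phiT (vact_biadd v) (vact_bal vV)). Qed.
Lemma vactE a n : vact v (phi a n) = phi (a * v) n.
Proof. exact: (tliftE phiT (vact_biadd v) (vact_bal vV)). Qed.

Lemma vact_lhom : lhom laM laM (vact v).
Proof.
split=> [|r]; first exact: vactD.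
apply: (tensor_ext phiT) => [||a n]; rewrite -?phiL ?vactE -?mulrA ?phiL //.
  exact: (additive_fun_comp vactD (lactD bimM r)).
exact: (additive_fun_comp (lactD bimM r) vactD).
Qed.

Lemma raM_vmorph u : raM u (vmorph v) = vact v u.
Proof. exact: (raM_rep vact_lhom). Qed.

Lemma vmorphE a n : raM (phi a n) (vmorph v) = phi (a * v) n.
Proof. by rewrite raM_vmorph vactE. Qed.

End VAction.

Lemma vmorphD v w : inV iota v -> inV iota w -> vmorph (v + w) = vmorph v + vmorph w.
Proof.
move=> vV wV; apply: A'_ext => a n.
by rewrite (ractDr bimM) !vmorphE ?mulrDr ?(tensorDl phiT) //; apply: inV_add.
Qed.

Lemma vmorphM v w : inV iota v -> inV iota w -> vmorph (v * w) = vmorph v * vmorph w.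
Proof.
move=> vV wV; apply: A'_ext => a n.
by rewrite (ractM bimM) !vmorphE ?mulrA //; apply: inV_mul.
Qed.

Lemma vmorph_inV v : inV iota v -> inV iota' (vmorph v).
Proof.
by move=> vV b; apply: A'_ext => a n; rewrite !(ractM bimM) -phiR !vmorphE // phiR.
Qed.

Lemma raM_vmorph_inC c u : inC c -> raM u (vmorph c) = laM c u.
Proof.
move=> cC; have cV := inC_inV iota cC.
rewrite raM_vmorph //; move: u; apply: (tensor_ext phiT) => [||a n].
- exact: vactD.
- exact: (lactD bimM).
- by rewrite vactE // cC phiL.
Qed.

Lemma vmorph_inC c : inC c -> inC (vmorph c).
Proof.
move=> cC a'; apply: raM_inj => u.
by rewrite !(ractM bimM) !raM_vmorph_inC // (lractA bimM).
Qed.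

(* Read v back off the action of v' on the elements phi 1 (gN l), as in sum_nuA_phi. *)
Definition vinv (w : A') : A := \sum_l nuA l (raM (phi 1 (gN l)) w).

Lemma vmorphK v : inV iota v -> vinv (vmorph v) = v.
Proof.
by move=> vV; rewrite -[RHS]sum_nuA_phi; apply: eq_bigr => l _; rewrite vmorphE // mul1r.
Qed.

Lemma raM_vinv w a n : inV iota' w -> raM (phi a n) w = phi (a * vinv w) n.
Proof.
move=> wV; suff raM_vinv1 : raM (phi 1 n) w = phi (vinv w) n.
  by rewrite phi_lact -(lractA bimM) raM_vinv1 phiL.
rewrite {1}(N_decomp n) (tensor_sumr phiT) (ract_suml bimM) /vinv (tensor_suml phiT).
apply: eq_bigr => l _.
by rewrite phiR -(ractM bimM) wV (ractM bimM) raM_dyadN.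
Qed.

Lemma vinv_inV w : inV iota' w -> inV iota (vinv w).
Proof.
move=> wV b; apply: phi_injl => n.
have raM_vinv1 n' : raM (phi 1 n') w = phi (vinv w) n' by rewrite raM_vinv // mul1r.
have phi_iota : phi (iota b) n = phi 1 (laN b n) by rewrite -(tensor_bal phiT) mul1r.
by rewrite phiL -raM_vinv1 (lractA bimM) -phiL mulr1 phi_iota raM_vinv1 -(tensor_bal phiT).
Qed.

Lemma vinvK w : inV iota' w -> vmorph (vinv w) = w.
Proof.
by move=> wV; apply: A'_ext => a n; rewrite vmorphE ?raM_vinv //; apply: vinv_inV.
Qed.

(* The image of h (x) m under Hom_A(M, A) (x)_A M ~= A'. *)
Definition dyad (h : M -> A) (m : M) : A' := endo_rep raM (fun u => laM (h u) m).

Lemma dyadE h m u : lhom laM (@lreg A) h -> raM u (dyad h m) = laM (h u) m.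
Proof.
case=> hD hZ; apply: raM_rep; split=> [x y|a x]; first by rewrite hD (lactDl bimM).
by rewrite hZ (lactM bimM).
Qed.

Section Dyad.
Variable h : M -> A.
Hypothesis h_lhom : lhom laM (@lreg A) h.

Lemma dyadDr : additive_fun (dyad h).
Proof. by move=> m1 m2; apply: raM_inj => u; rewrite (ractDr bimM) !dyadE // (lactD bimM). Qed.

Lemma dyad_sumr (I : Type) (r : seq I) (F : I -> M) :
  dyad h (\sum_(i <- r) F i) = \sum_(i <- r) dyad h (F i).
Proof. exact: (additive_fun_sum dyadDr). Qed.

Lemma dyadMr m a' : dyad h m * a' = dyad h (raM m a').
Proof. by apply: raM_inj => u; rewrite (ractM bimM) !dyadE // (lractA bimM). Qed.

Lemma dyadMl m a' : a' * dyad h m = dyad (fun u => h (raM u a')) m.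
Proof.
apply: raM_inj => u; rewrite (ractM bimM) !dyadE //.
exact: (lhom_comp (lhom_ract bimM a') h_lhom).
Qed.

Lemma dyad_lact a m : dyad h (laM a m) = dyad (fun u => h u * a) m.
Proof. by apply: raM_inj => u; rewrite !dyadE ?(lactM bimM) //; apply: lhom_mulr. Qed.

End Dyad.

Lemma dyad_suml (I : Type) (r : seq I) (H : I -> M -> A) m :
  (forall i, lhom laM (@lreg A) (H i)) ->
  dyad (fun u => \sum_(i <- r) H i u) m = \sum_(i <- r) dyad (H i) m.
Proof.
move=> H_lhom; apply: raM_inj => u; rewrite (ract_sumr bimM) dyadE; last exact: lhom_sum.
by rewrite (lact_suml bimM); apply: eq_bigr => i _; rewrite dyadE.
Qed.

Lemma dyadDl h1 h2 m : lhom laM (@lreg A) h1 -> lhom laM (@lreg A) h2 ->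
  dyad (fun u => h1 u + h2 u) m = dyad h1 m + dyad h2 m.
Proof.
move=> h1L h2L; apply: raM_inj => u.
by rewrite (ractDr bimM) !dyadE ?(lactDl bimM) //; apply: lhom_add.
Qed.

Lemma nuA_mulr_lhom l x : lhom laM (@lreg A) (fun u => nuA l u * x).
Proof. exact/lhom_mulr/nuA_lhom. Qed.

Lemma sum_dyad_nuA x m :
  \sum_l raM (phi 1 (gN l)) (dyad (fun u => nuA l u * x) m) = laM x m.
Proof.
transitivity (\sum_l laM (iota (nu l (gN l)) * x) m).
  by apply: eq_bigr => l _; rewrite dyadE ?nuAE ?mul1r //; apply: nuA_mulr_lhom.
by rewrite -(lact_suml bimM) -mulr_suml -rmorph_sum sum_nu rmorph1 mul1r.
Qed.

(* Left multiplication by x on M is a combination of right actions by elements of A'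
   (sum_dyad_nuA), and a central w commutes with those. *)
Lemma vinv_inC w : inC w -> inC (vinv w).
Proof.
move=> wC x; have wV := inC_inV iota' wC.
have raM_vinv1 n : raM (phi 1 n) w = phi (vinv w) n by rewrite raM_vinv // mul1r.
apply: phi_injl => n.
rewrite -raM_vinv // phi_lact -sum_dyad_nuA (ract_suml bimM).
transitivity (\sum_l laM (nuA l (phi (vinv w) (gN l)) * x) (phi 1 n)).
  apply: eq_bigr => l _; rewrite -(ractM bimM) wC (ractM bimM) raM_vinv1 dyadE //.
  exact: nuA_mulr_lhom.
by rewrite -(lact_suml bimM) -mulr_suml sum_nuA_phi -phi_lact.
Qed.

Lemma V_fgp_morita : V_fgp iota -> V_fgp iota'.
Proof.
exact: (V_fgp_transfer vmorph_inV vinv_inV vmorphK vinvK vmorphD vmorphM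
          vmorph_inC vinv_inC).
Qed.

Lemma sum_dyad_dual_basis : \sum_i dyad (fM i) (eM i) = 1.
Proof.
apply: raM_inj => u; rewrite (ract_sumr bimM) (ract1 bimM) [RHS]M_decomp.
by apply: eq_bigr => i _; rewrite dyadE.
Qed.

Lemma sum_fM_ract j u a' : \sum_i fM i u * fM j (raM (eM i) a') = fM j (raM u a').
Proof.
rewrite {2}(M_decomp u) (ract_suml bimM) (additive_fun_sum (fMD j)).
by apply: eq_bigr => i _; rewrite -(lractA bimM) fMZ.
Qed.

Section Splitting.
Variables (T : zmodType) (laT : A -> T -> T) (raT : T -> A -> T) (tau : A -> A -> T).
Variables (mu : T -> A -> A) (s : (A -> A) -> T).
Hypothesis bimT : is_bimod laT raT.
Hypothesis tauT :
  is_tensor (fun x (b : B) => x * iota b) (fun (b : B) y => iota b * y) tau.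
Hypothesis tauL : forall x a b, tau (x * a) b = laT x (tau a b).
Hypothesis tauR : forall a b y, tau a (b * y) = raT (tau a b) y.
Hypothesis muD : forall t t' v, mu (t + t') v = mu t v + mu t' v.
Hypothesis muE : forall x y v, inV iota v -> mu (tau x y) v = x * v * y.
Hypothesis sD : forall f g, isHomVA iota f -> isHomVA iota g ->
  s (fun v => f v + g v) = s f + s g.
Hypothesis sM : forall x y f, isHomVA iota f ->
  s (fun v => x * f v * y) = laT x (raT (s f) y).
Hypothesis muK : forall f, isHomVA iota f -> forall v, inV iota v -> mu (s f) v = f v.

Lemma s_sum (I : Type) (r : seq I) (G : I -> A -> A) : (forall j, isHomVA iota (G j)) ->
  s (fun a => \sum_(j <- r) G j a) = \sum_(j <- r) s (G j).
Proof.
apply: pointwise_sum_in => [|f g|f g]; [exact: isHomVA0 | exact: isHomVA_add | exact: sD].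
Qed.

Lemma s_lact c G : isHomVA iota G -> s (fun a => c * G a) = laT c (s G).
Proof.
move=> GH; rewrite -[s G](ract1 bimT) -sM //.
by congr s; apply: functional_extensionality => a; rewrite mulr1.
Qed.

Lemma s_ract d G : isHomVA iota G -> s (fun a => G a * d) = raT (s G) d.
Proof.
move=> GH; rewrite -[raT _ _](lact1 bimT) -sM //.
by congr s; apply: functional_extensionality => a; rewrite mul1r.
Qed.

Definition T' := tensor (fun x (b : B') => x * iota' b) (fun (b : B') y => iota' b * y).
Definition tau' : A' -> A' -> T' := tensor_pure _ _.
Let tau'T : is_tensor (fun x (b : B') => x * iota' b) (fun (b : B') y => iota' b * y) tau'.
Proof. exact: tensor_pure_is_tensor. Qed.

(* Vanishing outside V' makes mu' additive in t for every w. *)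
Definition mu' (t : T') (w : A') : A' :=
  if asbool (inV iota' w) then tlift tau' (fun x y => x * w * y) t else 0.

Let mu'_biadd w : biadditive (fun x y : A' => x * w * y).
Proof. by split=> *; rewrite ?mulrDl ?mulrDr. Qed.
Let mu'_bal w : inV iota' w ->
  balanced (fun x (b : B') => x * iota' b) (fun (b : B') y => iota' b * y)
    (fun x y => x * w * y).
Proof. by move=> wV x b y; rewrite -[x * iota' b * w]mulrA wV !mulrA. Qed.

Lemma mu'D w : additive_fun (mu'^~ w).
Proof.
rewrite /mu'; case: asboolP => [wV|_ t t']; last by rewrite addr0.
exact: (tliftD tau'T (mu'_biadd w) (mu'_bal wV)).
Qed.

Lemma mu'E w x y : inV iota' w -> mu' (tau' x y) w = x * w * y.
Proof.
rewrite /mu'; case: asboolP => // wV _.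
exact: (tliftE tau'T (mu'_biadd w) (mu'_bal wV)).
Qed.

(* The image of h (x) (x (x) y) (x) m under
   Hom_A(M, A) (x)_A (A (x)_B A) (x)_A M ~= A' (x)_B' A'; the tensor over B is split
   through N using sum_l nu_l(g_l) = 1. *)
Definition tmap_pure (h : M -> A) (m : M) (x y : A) : T' :=
  \sum_l tau' (dyad h (phi x (gN l))) (dyad (fun u => nuA l u * y) m).

Section TensorMapPure.
Variables (h : M -> A) (m : M).
Hypothesis hL : lhom laM (@lreg A) h.

Lemma tmap_pure_biadd : biadditive (tmap_pure h m).
Proof.
split=> [x x' y|x y y']; rewrite /tmap_pure -big_split; apply: eq_bigr => l _.
  by rewrite (tensorDl phiT) dyadDr // (tensorDl tau'T).
have -> : (fun u => nuA l u * (y + y')) = (fun u => nuA l u * y + nuA l u * y').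
  by apply: functional_extensionality => u; rewrite mulrDr.
by rewrite dyadDl ?(tensorDr tau'T) //; apply: nuA_mulr_lhom.
Qed.

Lemma tmap_pure_bal :
  balanced (fun x (b : B) => x * iota b) (fun (b : B) y => iota b * y) (tmap_pure h m).
Proof.
move=> x b y; rewrite /tmap_pure.
pose Y l := dyad (fun u => nuA l u * y) m.
have split_l l : tau' (dyad h (phi (x * iota b) (gN l))) (Y l) =
    \sum_l' tau' (dyad h (phi x (gN l'))) (iota' (dyadN l' (laN b (gN l))) * Y l).
  rewrite (tensor_bal phiT) {1}(N_decomp (laN b (gN l))) (tensor_sumr phiT).
  rewrite dyad_sumr // (tensor_suml tau'T).
  by apply: eq_bigr => l' _; rewrite phiR -dyadMr // (tensor_bal tau'T).
rewrite (eq_bigr _ (fun l _ => split_l l)) exchange_big /=; apply: eq_bigr => l' _.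
rewrite -(tensor_sumr tau'T); congr tau'.
apply: raM_inj => u; rewrite (ract_sumr bimM) dyadE; last exact: nuA_mulr_lhom.
have raM_Y l : raM u (iota' (dyadN l' (laN b (gN l))) * Y l) =
    laM (nuA l' u * iota (b * nu l (gN l)) * y) m.
  by rewrite (ractM bimM) dyadE ?raM_dyadN ?nuAE ?nuZ ?rmorphM //; apply: nuA_mulr_lhom.
rewrite (eq_bigr _ (fun l _ => raM_Y l)) -(lact_suml bimM) -mulr_suml -mulr_sumr.
by rewrite -rmorph_sum -mulr_sumr sum_nu mulr1 mulrA.
Qed.

End TensorMapPure.

Definition tmap (h : M -> A) (m : M) : T -> T' := tlift tau (tmap_pure h m).

Lemma tmapD h m : lhom laM (@lreg A) h -> additive_fun (tmap h m).
Proof. by move=> hL; apply: (tliftD tauT (tmap_pure_biadd m hL) (tmap_pure_bal m hL)). Qed.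

Lemma tmapE h m x y : lhom laM (@lreg A) h -> tmap h m (tau x y) = tmap_pure h m x y.
Proof. by move=> hL; apply: (tliftE tauT (tmap_pure_biadd m hL) (tmap_pure_bal m hL)). Qed.

Definition laT' : A' -> T' -> T' := tensor_lact tau'.
Definition raT' : T' -> A' -> T' := tensor_ract tau'.

Lemma laT'D a' : additive_fun (laT' a'). Proof. exact: (tensor_lactD tau'T). Qed.
Lemma raT'D a' : additive_fun (raT'^~ a'). Proof. exact: (tensor_ractD tau'T). Qed.

Section TensorMap.
Variables (h : M -> A) (m : M).
Hypothesis hL : lhom laM (@lreg A) h.

Lemma mu'_tmap t v : inV iota v -> mu' (tmap h m t) (vmorph v) = dyad h (laM (mu t v) m).
Proof.
move=> vV; have wV := vmorph_inV vV.
move: t; apply: (tensor_ext tauT) => [||x y].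
- exact: (additive_fun_comp (mu'D _) (tmapD m hL)).
- by move=> t t'; rewrite muD (lactDl bimM) dyadDr.
rewrite tmapE // /tmap_pure (additive_fun_sum (mu'D _)) muE //.
apply: raM_inj => u; rewrite (ract_sumr bimM) dyadE //.
have raM_mu' l : raM u (mu' (tau' (dyad h (phi x (gN l))) (dyad (fun u => nuA l u * y) m))
                    (vmorph v)) = laM (h u * x * v * iota (nu l (gN l)) * y) m.
  rewrite mu'E // !(ractM bimM) [raM u _]dyadE // -phiL vmorphE // dyadE ?nuAE //.
  exact: nuA_mulr_lhom.
rewrite (eq_bigr _ (fun l _ => raM_mu' l)) -(lact_suml bimM) -mulr_suml -mulr_sumr.
by rewrite -rmorph_sum sum_nu rmorph1 mulr1 -(lactM bimM) !mulrA.
Qed.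

Lemma tmap_laT a t : tmap h m (laT a t) = tmap (fun u => h u * a) m t.
Proof.
have haL := lhom_mulr a hL.
move: t; apply: (tensor_ext tauT) => [||x y].
- exact: (additive_fun_comp (tmapD m hL) (lactD bimT a)).
- exact: tmapD.
by rewrite -tauL !tmapE //; apply: eq_bigr => l _; rewrite phiL dyad_lact.
Qed.

Lemma tmap_raT a t : tmap h m (raT t a) = tmap h (laM a m) t.
Proof.
move: t; apply: (tensor_ext tauT) => [||x y].
- exact: (additive_fun_comp (tmapD m hL) (ractD bimT a)).
- exact: tmapD.
rewrite -tauR !tmapE //; apply: eq_bigr => l _.
rewrite dyad_lact; last exact: nuA_mulr_lhom.
by congr tau'; congr dyad; apply: functional_extensionality => u; rewrite mulrA.
Qed.

Lemma laT'_tmap a' t : laT' a' (tmap h m t) = tmap (fun u => h (raM u a')) m t.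
Proof.
have ha'L := lhom_comp (lhom_ract bimM a') hL.
move: t; apply: (tensor_ext tauT) => [||x y].
- exact: (additive_fun_comp (laT'D a') (tmapD m hL)).
- exact: tmapD.
rewrite !tmapE // (additive_fun_sum (laT'D a')).
by apply: eq_bigr => l _; rewrite /laT' (tensor_lactE tau'T) dyadMl.
Qed.

Lemma raT'_tmap a' t : raT' (tmap h m t) a' = tmap h (raM m a') t.
Proof.
move: t; apply: (tensor_ext tauT) => [||x y].
- exact: (additive_fun_comp (raT'D a') (tmapD m hL)).
- exact: tmapD.
rewrite !tmapE // (additive_fun_sum (raT'D a')).
by apply: eq_bigr => l _; rewrite /raT' (tensor_ractE tau'T) dyadMr //; apply: nuA_mulr_lhom.
Qed.

End TensorMap.

Lemma tmap_suml (I : Type) (r : seq I) (H : I -> M -> A) m t :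
  (forall i, lhom laM (@lreg A) (H i)) ->
  tmap (fun u => \sum_(i <- r) H i u) m t = \sum_(i <- r) tmap (H i) m t.
Proof.
move=> HL; have HsL := lhom_sum r HL.
move: t; apply: (tensor_ext tauT) => [||x y].
- exact: tmapD.
- by apply: additive_fun_big => i; apply: tmapD.
rewrite tmapE //; under [RHS]eq_bigr do rewrite tmapE //.
by rewrite exchange_big /=; apply: eq_bigr => l _; rewrite dyad_suml // (tensor_suml tau'T).
Qed.

Lemma tmap_sumr h (I : Type) (r : seq I) (F : I -> M) t : lhom laM (@lreg A) h ->
  tmap h (\sum_(i <- r) F i) t = \sum_(i <- r) tmap h (F i) t.
Proof.
move=> hL; move: t; apply: (tensor_ext tauT) => [||x y].
- exact: tmapD.
- by apply: additive_fun_big => i; apply: tmapD.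
rewrite tmapE //; under [RHS]eq_bigr do rewrite tmapE //.
rewrite exchange_big /=; apply: eq_bigr => l _.
by rewrite dyad_sumr ?(tensor_sumr tau'T) //; apply: nuA_mulr_lhom.
Qed.

(* The entries of f(v') in the dual basis of M; zero outside V, as isHomVA demands. *)
Definition coef (i k : 'I_nM) (f : A' -> A') (a : A) : A :=
  if asbool (inV iota a) then fM k (raM (eM i) (f (vmorph a))) else 0.

Lemma coef_isHomVA i k f : isHomVA iota' f -> isHomVA iota (coef i k f).
Proof.
case=> fD fC _; rewrite /coef; split=> [v w vV wV|v c vV cC|a aV].
- have vwV := inV_add vV wV.
  do 3 case: asboolP => // _.
  rewrite vmorphD // fD ?(ractDr bimM) ?fMD //; exact: vmorph_inV.
- have cV := inC_inV iota cC; have vcV := inV_mul vV cV.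
  do 2 case: asboolP => // _.
  rewrite vmorphM ?fC //; [|exact: vmorph_inV|exact: vmorph_inC].
  by rewrite (ractM bimM) raM_vmorph_inC // fMZ cC.
- by case: asboolP.
Qed.

Lemma coef_mull i k f a' :
  coef i k (fun v => a' * f v) = (fun a => \sum_j fM j (raM (eM i) a') * coef j k f a).
Proof.
apply: functional_extensionality => a; rewrite /coef; case: asboolP => _.
  rewrite (ractM bimM) {1}(M_decomp (raM (eM i) a')) (ract_suml bimM).
  by rewrite (additive_fun_sum (fMD k)); apply: eq_bigr => j _; rewrite -(lractA bimM) fMZ.
by rewrite big1 // => j _; rewrite mulr0.
Qed.

Lemma coef_mulr i k f a' :
  coef i k (fun v => f v * a') = (fun a => \sum_j coef i j f a * fM k (raM (eM j) a')).
Proof.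
apply: functional_extensionality => a; rewrite /coef; case: asboolP => _.
  rewrite (ractM bimM) {1}(M_decomp (raM (eM i) (f (vmorph a)))) (ract_suml bimM).
  by rewrite (additive_fun_sum (fMD k)); apply: eq_bigr => j _; rewrite -(lractA bimM) fMZ.
by rewrite big1 // => j _; rewrite mul0r.
Qed.

Definition s' (f : A' -> A') : T' := \sum_i \sum_k tmap (fM i) (eM k) (s (coef i k f)).

Lemma s'D f g : isHomVA iota' f -> isHomVA iota' g -> s' (fun v => f v + g v) = s' f + s' g.
Proof.
move=> fH gH; rewrite /s' -big_split; apply: eq_bigr => i _.
rewrite -big_split; apply: eq_bigr => k _.
have -> : coef i k (fun v => f v + g v) = (fun a => coef i k f a + coef i k g a).
  apply: functional_extensionality => a; rewrite /coef; case: asboolP => _.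
    by rewrite (ractDr bimM) fMD.
  by rewrite addr0.
by rewrite sD ?tmapD //; apply: coef_isHomVA.
Qed.

Lemma s'_lact f a' : isHomVA iota' f -> s' (fun v => a' * f v) = laT' a' (s' f).
Proof.
move=> fH; have coefH j k := coef_isHomVA j k fH.
have coef_lactH j k c := isHomVA_mull c (coefH j k).
transitivity (\sum_i \sum_k \sum_j
    tmap (fun u => fM i u * fM j (raM (eM i) a')) (eM k) (s (coef j k f))).
  apply: eq_bigr => i _; apply: eq_bigr => k _.
  rewrite coef_mull s_sum // (additive_fun_sum (tmapD _ (fM_lhom i))).
  by apply: eq_bigr => j _; rewrite s_lact // tmap_laT.
rewrite exchange_big /= (eq_bigr _ (fun k _ => exchange_big _ _ _ _ _ _)) exchange_big /=.
rewrite /s' (additive_fun_sum (laT'D a')); apply: eq_bigr => j _.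
rewrite (additive_fun_sum (laT'D a')); apply: eq_bigr => k _.
rewrite -tmap_suml; last by move=> i; apply: lhom_mulr.
rewrite laT'_tmap //; congr tmap; apply: functional_extensionality => u.
exact: sum_fM_ract.
Qed.

Lemma s'_ract f a' : isHomVA iota' f -> s' (fun v => f v * a') = raT' (s' f) a'.
Proof.
move=> fH; have coefH j k := coef_isHomVA j k fH.
have coef_ractH i j d := isHomVA_mulr d (coefH i j).
transitivity (\sum_i \sum_k \sum_j
    tmap (fM i) (laM (fM k (raM (eM j) a')) (eM k)) (s (coef i j f))).
  apply: eq_bigr => i _; apply: eq_bigr => k _.
  rewrite coef_mulr s_sum // (additive_fun_sum (tmapD _ (fM_lhom i))).
  by apply: eq_bigr => j _; rewrite s_ract // tmap_raT.
rewrite /s' (additive_fun_sum (raT'D a')); apply: eq_bigr => i _.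
rewrite exchange_big /= (additive_fun_sum (raT'D a')); apply: eq_bigr => j _.
by rewrite -tmap_sumr // raT'_tmap // -M_decomp.
Qed.

Lemma mu'_s' f : isHomVA iota' f -> forall w, inV iota' w -> mu' (s' f) w = f w.
Proof.
move=> fH w wV; have vV := vinv_inV wV.
rewrite -(vinvK wV) (additive_fun_sum (mu'D _)).
transitivity (\sum_i dyad (fM i) (eM i) * f (vmorph (vinv w))); last first.
  by rewrite -mulr_suml sum_dyad_dual_basis mul1r.
apply: eq_bigr => i _; rewrite dyadMr // [raM (eM i) _]M_decomp dyad_sumr //.
rewrite (additive_fun_sum (mu'D _)); apply: eq_bigr => k _.
rewrite mu'_tmap // muK //; last exact: coef_isHomVA.
by rewrite /coef; case: asboolP.
Qed.

Lemma strongly_separable_morita : V_fgp iota -> strongly_separable iota'.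
Proof.
move=> VP; split; first exact: V_fgp_morita.
exists T', laT', raT', tau'; split.
- exact: (tensor_bimod tau'T).
- exact: tau'T.
- by move=> x a b; rewrite /laT' (tensor_lactE tau'T).
- by move=> a b y; rewrite /raT' (tensor_ractE tau'T).
exists mu', s'; split.
- by move=> t t' v; rewrite mu'D.
- by move=> x y v; apply: mu'E.
- exact: s'D.
- move=> x y f fH; have fyH := isHomVA_mulr y fH.
  rewrite -s'_ract // -s'_lact //; congr s'.
  by apply: functional_extensionality => v; rewrite mulrA.
- exact: mu'_s'.
Qed.

End Splitting.
End MoritaTransfer.

Theorem theorem3p4 (A B A' B' : pzRingType)
    (iota : {rmorphism B -> A}) (iota' : {rmorphism B' -> A'}) :
  injective iota -> injective iota' ->
  strongly_separable iota -> morita_equiv iota iota' ->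
  strongly_separable iota'.
Proof.
move=> _ _ [VP [T [laT [raT [tau [bimT tauT tauL tauR [mu [s [muD muE sD sM muK]]]]]]]]].
case=> M [laM [raM [N [laN [raN [[bimM Mdiv _ endM raM_inj] [bimN _ Ndiv endN _]]]]]]].
case=> phi [phiT phiL phiR].
have [nM [fM [eM [fM_lhom M_decomp]]]] := ldivides_dual_basis Mdiv.
have [lmodN _ _] := bimN.
have [kN [nu [gN [nu_lhom sum_nu]]]] := ldivides_reg_trace_one lmodN Ndiv.
exact: (strongly_separable_morita bimM bimN endM raM_inj endN fM_lhom M_decomp nu_lhom
  sum_nu phiT phiL phiR bimT tauT tauL tauR muD muE sD sM muK VP).
Qed.
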